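(* For every $n\ge5$ and every integer $t$ with $n-2\le t\le \frac{n^2}{8}+\frac{n}{4}-\frac{11}{8}$, there exists an $(n,t)$-blocker.
   Context: For a convex $n$-gon: an edge is a segment between two vertices; diagonals are edges that are not sides of the polygon. Two edges cross if they share an interior point. A triangulation is a maximal set of pairwise non-crossing diagonals. A blocker is a set $B$ of diagonals having a diagonal in common with every triangulation; it is saturated if for every $e\in B$, $B\setminus\{e\}$ is not a blocker. An $(n,t)$-blocker is a saturated blocker of size $t$ for a convex $n$-gon. *)

(* Convex n-gon modelled combinatorially: vertices are
   'I_n in cyclic (convex-position) order. *)
From mathcomp Require Import all_boot all_order.
Set Implicit Arguments. Unset Strict Implicit. Unset Printing Implicit Defensive.

(* An edge {i,j} is represented by the ordered pair (i,j) with i < j. *)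
Definition edge n := ('I_n * 'I_n)%type.

(* Diagonal: an edge (i,j), i<j, that is not a side of the polygon, i.e.
   j <> i+1 and (i,j) <> (0,n-1). *)
Definition is_diag n (e : edge n) : bool :=
  [&& (e.1 < e.2)%N, (e.1.+1 < e.2)%N & ~~ ((e.1 == 0 :> nat) && (e.2 == n.-1 :> nat))].

(* Two distinct diagonals of a convex polygon share an interior point iff
   their endpoints strictly interleave. *)
Definition cross n (e f : edge n) : bool :=
  [|| [&& (e.1 < f.1)%N, (f.1 < e.2)%N & (e.2 < f.2)%N]
    | [&& (f.1 < e.1)%N, (e.1 < f.2)%N & (f.2 < e.2)%N]].

Definition noncrossing n (S : {set edge n}) : Prop :=
  forall e f, e \in S -> f \in S -> ~~ cross e f.

Definition triangulation n (T : {set edge n}) : Prop :=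
  [/\ (forall e, e \in T -> is_diag e),
      noncrossing T &
      forall d, is_diag d -> d \notin T -> ~ noncrossing (d |: T)].

Definition blocker n (B : {set edge n}) : Prop :=
  (forall e, e \in B -> is_diag e) /\
  forall T, triangulation T -> exists e, (e \in B) && (e \in T).

Definition saturated_blocker n (B : {set edge n}) : Prop :=
  blocker B /\ forall e, e \in B -> ~ blocker (B :\ e).

Definition nt_blocker n t (B : {set edge n}) : Prop :=
  saturated_blocker B /\ #|B| = t.

From mathcomp Require Import all_boot all_order.
From mathcomp Require Import zify.
From Stdlib Require Import Classical.
Set Implicit Arguments. Unset Strict Implicit. Unset Printing Implicit Defensive.

(* Cut the polygon with vertices 0..n between m and m+1 and colour the vertices
   in two colours.  Let e be an edge of a triangulation (or a side) joining the
   two halves, with the colour pattern of the side (0, n).  The triangle on the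
   inner side of e has an apex z, and one of the edges from z to the ends of e
   again joins the two halves and is strictly shorter.  Unless that edge is a
   monochromatic diagonal it has the same colour pattern as e, so, since the
   side (m, m+1) has the opposite pattern, the descent stops at a monochromatic
   diagonal: the monochromatic diagonals across the cut form a blocker.
   Conversely, a staircase of edges across the cut, running from (0, n) to
   (m, m+1) and changing one endpoint at a time, extends to a triangulation in
   which every other diagonal across the cut is crossed.  For the colouring
   0 | 1..c | c+1..p | p+1 || p+2..s | s+1..n coloured 0, 1, 0, 1 || 0, 1, every
   monochromatic diagonal lies on such a staircase whose other edges are
   bichromatic, so the blocker is saturated; it consists of two complete
   bipartite families and has (c+1)(n-s) + (p-c+1)(s-p-1) diagonals. *)

Lemma card_ord_range N a b : b <= N -> #|[set i : 'I_N | a <= i < b]| = b - a.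
Proof.
move=> bN; rewrite cardsE cardE /enum_mem size_filter -[Finite.enum _]enumT.
rewrite (@eq_count _ _ (preim val (fun i => a <= i < b))) // -count_map val_enum_ord.
suff -> : forall k, count (fun i => a <= i < b) (iota 0 k) = minn b k - minn a k by lia.
by elim=> [|k IH]; rewrite ?minn0 // -addn1 iotaD count_cat IH /=; lia.
Qed.

Lemma card_ord_rangeU N a b c d : b <= c -> c <= d <= N ->
  #|[set i : 'I_N | a <= i < b] :|: [set i : 'I_N | c <= i < d]| = (b - a) + (d - c).
Proof.
move=> bc dN; have disj : [set i : 'I_N | a <= i < b] :&: [set i : 'I_N | c <= i < d] = set0.
  by apply/setP => i; rewrite !inE; lia.
by rewrite cardsU disj cards0 subn0 !card_ord_range //; lia.
Qed.

Definition min_block_size n J := 2 * J + 1 + (n - 2 - 2 * J) * J.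

Lemma min_block_size_succ n J :
  2 * J + 4 <= n -> min_block_size n J.+1 <= min_block_size n J + (n - 2 - 2 * J).
Proof.
move=> Jn; have [q ->] : exists q, n = q + 2 * J + 4 by exists (n - 2 * J - 4); lia.
rewrite /min_block_size.
have -> : q + 2 * J + 4 - 2 - 2 * J.+1 = q by lia.
have -> : q + 2 * J + 4 - 2 - 2 * J = q.+2 by lia.
by rewrite mulnS !mulSn; lia.
Qed.

(* With p = n-2-2J and s = n-1-J the block colouring yields the sizes
   min_block_size n J + c for c <= p; these ranges overlap for consecutive J,
   and J = n %/ 4 reaches the upper bound on t. *)
Lemma blocker_parameters n t : 4 <= n -> n - 1 <= t -> 8 * t + 11 <= n.+1 ^ 2 + 2 * n.+1 ->
  exists p s c, [/\ p.+2 <= s, s < n, c <= p & t = c.+1 * (n - s) + (p - c).+1 * (s - p.+1)].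
Proof.
move=> n4 t_lo t_hi.
pose covers J := [&& 0 < J, 2 * J + 2 <= n & t <= min_block_size n J + (n - 2 - 2 * J)].
have covers_quarter : covers (n %/ 4).
  rewrite /covers /min_block_size; move: t_hi n4 t_lo; rewrite (divn_eq n 4).
  have := ltn_pmod n (isT : 0 < 4); move: (n %/ 4) (n %% 4) => J r.
  by case: r => [|[|[|[|r]]]] //= _ t_hi n4 t_lo; apply/and3P; split; nia.
have [J /and3P[J0 Jn tJ] Jmin] := ex_minnP (ex_intro covers _ covers_quarter).
have loJ : min_block_size n J <= t.
  have [J1 | J1] := leqP J 1.
    by move: t_lo; rewrite /min_block_size (_ : J = 1) /=; lia.
  have : ~~ covers J.-1 by apply/negP => /Jmin; lia.
  have := @min_block_size_succ n J.-1; rewrite /covers prednK //; lia.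
have [c [d [tc qd]]] : exists c d, t = min_block_size n J + c /\ n - 2 - 2 * J = c + d.
  by exists (t - min_block_size n J), (n - 2 - 2 * J - (t - min_block_size n J)); lia.
exists (c + d), (c + d + J.+1), c; split; [lia | lia | lia |].
have -> : n - (c + d + J.+1) = J.+1 by lia.
have -> : c + d + J.+1 - (c + d).+1 = J by lia.
rewrite tc /min_block_size qd addKn !mulSn mulnDl; lia.
Qed.

Section ConvexPolygon.

(* The polygon has the n+1 vertices 0..n. *)
Variable n : nat.

Implicit Types (T S : {set edge n.+1}) (e f g : edge n.+1).

Definition diagN (a b : nat) :=
  [&& a < b, a.+1 < b & ~~ ((a == 0) && (b == n))].

Definition crossN (a b c d : nat) :=
  [|| [&& a < c, c < b & b < d] | [&& c < a, a < d & d < b]].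

Lemma crossNC a b c d : crossN a b c d = crossN c d a b.
Proof. by rewrite /crossN orbC. Qed.

Lemma is_diagE e : is_diag e = diagN e.1 e.2. Proof. by []. Qed.

Lemma crossE e f : cross e f = crossN e.1 e.2 f.1 f.2. Proof. by []. Qed.

Definition edgeN (a b : nat) : edge n.+1 := (inord a, inord b).

Lemma edgeN1 a b : a <= n -> (edgeN a b).1 = a :> nat.
Proof. by move=> ?; rewrite /= inordK. Qed.

Lemma edgeN2 a b : b <= n -> (edgeN a b).2 = b :> nat.
Proof. by move=> ?; rewrite /= inordK. Qed.

Lemma edgeN_val e : edgeN e.1 e.2 = e.
Proof. by case: e => a b; rewrite /edgeN !inord_val. Qed.

Lemma triangulation_cross T g :
  triangulation T -> is_diag g -> g \notin T -> exists2 f, f \in T & cross g f.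
Proof.
case=> _ ncT maxT dg gT; apply: NNPP => no_cross; apply: (maxT g dg gT) => e f.
have g_ncT h : h \in T -> ~~ cross g h.
  by move=> hT; apply/negP => gh; apply: no_cross; exists h.
rewrite !in_setU1 => /predU1P[-> | eT] /predU1P[-> | fT].
- by rewrite crossE /crossN; lia.
- exact: g_ncT.
- by rewrite crossE crossNC -crossE; apply: g_ncT.
- exact: ncT.
Qed.

Lemma noncrossing_extend S :
  (forall e, e \in S -> is_diag e) -> noncrossing S ->
  exists2 T, triangulation T & S \subset T.
Proof.
move=> Sd; have [k] := ubnP #|~: S|; elim: k S Sd => // k IH S Sd leS ncS.
case: (classic (exists d, [/\ is_diag d, d \notin S & noncrossing (d |: S)]))
  => [[d [dd dS ncdS]] | noExt].
- have [e ee||T trT sT] := IH (d |: S) _ _ ncdS.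
  + by case/setU1P: ee => [->|/Sd].
  + rewrite -ltnS (leq_trans _ leS) // ltnS; apply: proper_card.
    by rewrite -properC !setCK; apply/properP; split; [exact: subsetUr | exists d; rewrite ?setU11].
  by exists T => //; apply: subset_trans sT; exact: subsetUr.
- exists S => //; split=> // d dd dS ncdS; exact: noExt (ex_intro _ d (And3 dd dS ncdS)).
Qed.

Section Triangulation.

Variables (T : {set edge n.+1}) (trT : triangulation T).

Definition present (a b : nat) :=
  (a < b <= n) && ((edgeN a b \in T) || ~~ diagN a b).

Lemma mem_present e : e \in T -> present e.1 e.2.
Proof.
case: trT => dT _ _ eT; rewrite /present edgeN_val eT andbT.
by have := dT e eT; have := ltn_ord e.2; rewrite is_diagE /diagN; lia.
Qed.

Lemma present_noncross a b x y : present a b -> present x y -> ~~ crossN a b x y.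
Proof.
case: trT => _ ncT _.
have side u w u' w' : u < w <= n -> ~~ diagN u w -> u' < w' <= n -> ~~ crossN u w u' w'.
  by rewrite /diagN /crossN; lia.
case/andP=> ab /orP[abT | ndab] /andP[xy /orP[xyT | ndxy]]; last 2 first.
- exact: side.
- exact: side.
- by have := ncT _ _ abT xyT; rewrite crossE !edgeN1 ?edgeN2 //; lia.
- by rewrite crossNC side.
Qed.

Lemma absent_cross a b :
  a < b <= n -> ~~ present a b -> exists x y, present x y && crossN a b x y.
Proof.
move=> ab; rewrite /present ab negb_or negbK /= => /andP[abT dab].
have [|f fT] := triangulation_cross trT _ abT; first by rewrite is_diagE !edgeN1 ?edgeN2 //; lia.
rewrite crossE edgeN1 ?edgeN2 => [abf||]; try lia.
by exists f.1, f.2; rewrite abf andbT; apply: mem_present.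
Qed.

Lemma present_apex a b :
  present a b -> a.+1 < b -> exists2 z, a < z < b & present a z && present z b.
Proof.
move=> pab ab2; have abn : a < b <= n by case/andP: pab.
have pa1 : present a a.+1 by rewrite /present /diagN orbC; apply/andP; split; lia.
have exP : exists z, (z < b) && present a z by exists a.+1; rewrite pa1 andbT.
have ubP z : (z < b) && present a z -> z <= b by case/andP=> /ltnW.
(* z is the last vertex before b joined to a: an edge crossing (z, b) would
   have to leave from a to a later vertex. *)
have [z /andP[zb paz] zmax] := ex_maxnP exP ubP.
have az : a < z by case/andP: paz => /andP[].
exists z; [lia | rewrite paz /=].
apply: contraT => /absent_cross[|x [y /andP[pxy zbxy]]]; first lia.
have := present_noncross pab pxy; have := present_noncross paz pxy.
have := present_noncross pxy pab; have := present_noncross pxy paz.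
move: zbxy; rewrite /crossN => n1 n2 n3 n4 zbxy.
have xa : x = a by lia.
have : (y < b) && present a y by rewrite -xa pxy andbT; lia.
by move/zmax; lia.
Qed.

End Triangulation.

Section Cut.

Variable m : nat.

Definition chain_step (p q : nat * nat) :=
  (q.1 <= m < q.2) && ((p.1 <= q.1) && (q.2 == p.2) || (p.1 == q.1) && (q.2 <= p.2)).

(* Between consecutive points p, q of a staircase we also record the third side
   of their triangle; one of (p.1, q.1) and (q.2, p.2) is a degenerate pair
   (x, x), which is harmless: it is no diagonal and crosses nothing. *)
Fixpoint chain_edges (p : nat * nat) (s : seq (nat * nat)) : seq (nat * nat) :=
  if s is q :: s' then [:: p, (p.1, q.1), (q.2, p.2) & chain_edges q s'] else [:: p].

Lemma chain_edges_head p s : p \in chain_edges p s.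
Proof. by case: s => [|q s]; rewrite inE eqxx. Qed.

Lemma chain_edges_within p s :
  path chain_step p s -> all (fun x => (p.1 <= x.1) && (x.2 <= p.2)) (chain_edges p s).
Proof.
elim: s p => [|q s IH] p /=; first by rewrite !leqnn.
case/andP=> pq /IH /allP qs; move: pq; rewrite /chain_step !leqnn /= => pq.
apply/and3P; split; [lia | lia | apply/allP => x /qs]; lia.
Qed.

Lemma chain_edges_noncrossing p s :
  path chain_step p s -> {in chain_edges p s &, forall x y, ~~ crossN x.1 x.2 y.1 y.2}.
Proof.
elim: s p => [|q s IH] p /=.
  by move=> _ x y; rewrite !inE => /eqP-> /eqP->; rewrite /crossN; lia.
case/andP=> pq qs x y; have /allP within := chain_edges_within qs.
move: pq; rewrite /chain_step => pq.
rewrite !inE => /or4P[/eqP-> | /eqP-> | /eqP-> | xq] /or4P[/eqP-> | /eqP-> | /eqP-> | yq];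
  first [exact: IH qs _ _ xq yq | rewrite /crossN /=];
  try move: (within _ xq); try move: (within _ yq); lia.
Qed.

Lemma chain_edges_cross p s u w :
  p.2 <= n -> path chain_step p s ->
  p.1 <= u <= (last p s).1 -> (last p s).2 <= w <= p.2 -> u <= m < w ->
  (u, w) \notin p :: s ->
  exists2 x, x \in chain_edges p s & diagN x.1 x.2 && crossN u w x.1 x.2.
Proof.
elim: s p => [|q s IH] [a b] /= bn.
  by move=> _ ua wb _; rewrite inE xpair_eqE; lia.
case/andP=> + qs ua wb uwm; rewrite /chain_step /= => pq.
rewrite inE xpair_eqE negb_or => /andP[uwab uwqs].
have qhead : q \in chain_edges q s := chain_edges_head q s.
(* Leaving the box of the rest of the chain, (u, w) crosses q or a third side. *)
have [uq | qu] := ltnP u q.1.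
  have [ua' | au] := eqVneq u a.
    by exists q; rewrite ?inE ?qhead ?orbT // /diagN /crossN; lia.
  by exists (a, q.1); rewrite ?inE ?eqxx ?orbT // /diagN /crossN /=; lia.
have [qw | wq] := ltnP q.2 w.
  have [wb' | bw] := eqVneq w b.
    by exists q; rewrite ?inE ?qhead ?orbT // /diagN /crossN; lia.
  by exists (q.2, b); rewrite ?inE ?eqxx ?orbT // /diagN /crossN /=; lia.
have [||| x xq xuw] := IH q _ qs _ _ uwm uwqs; [lia | lia | lia |].
by exists x; rewrite ?inE ?xq ?orbT.
Qed.

Definition chain_set p s : {set edge n.+1} :=
  [set e : edge n.+1 | is_diag e && ((e.1 : nat, e.2 : nat) \in chain_edges p s)].

Lemma chain_set_noncrossing p s : path chain_step p s -> noncrossing (chain_set p s).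
Proof.
move=> ps e f; rewrite !inE => /andP[_ eC] /andP[_ fC].
by rewrite crossE; apply: (chain_edges_noncrossing ps eC fC).
Qed.

Section Colouring.

Variable col : nat -> bool.

Definition mono_cut : {set edge n.+1} :=
  [set e : edge n.+1 | [&& is_diag e, e.1 <= m < e.2 & col e.1 == col e.2]].

Section Descent.

Variables (T : {set edge n.+1}) (trT : triangulation T).
Hypothesis col_cut : col m.+1 != col m.

Lemma present_mono_cut u w :
  present T u w -> diagN u w -> u <= m < w -> col u = col w ->
  exists e, (e \in mono_cut) && (e \in T).
Proof.
case/andP=> uwn + duw cutuw cuw; rewrite duw orbF => uwT; exists (edgeN u w).
by rewrite uwT inE is_diagE !edgeN1 ?edgeN2 ?duw ?cutuw ?cuw ?eqxx //; lia.
Qed.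

Lemma bicoloured_descent u w :
  present T u w -> u <= m < w -> col u != col w -> col u != col m ->
  exists e, (e \in mono_cut) && (e \in T).
Proof.
have [k] := ubnP (w - u); elim: k u w => // k IH u w ltk puw cutuw cuw cum.
have um : u != m by apply: contraNneq cum => ->.
have uwn : u < w <= n by case/andP: puw.
have [|z /andP[uz zw] /andP[puz pzw]] := present_apex trT puw; first lia.
have [zm | mz] := leqP z m.
- have [czw | czw] := eqVneq (col z) (col w).
    have zw1 : (z != m) || (w != m.+1).
      rewrite -negb_and; apply/negP => /andP[/eqP zm' /eqP wm'].
      by move: col_cut; rewrite -wm' -zm' czw eqxx.
    by apply: present_mono_cut pzw _ _ czw; [move: zw1; rewrite /diagN | ]; lia.
  have czm : col z != col m.
    move: czw cuw cum; case: (col z); case: (col w); case: (col u); case: (col m) => //.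
  by apply: (IH z w _ pzw _ czw czm); lia.
- have [cuz | cuz] := eqVneq (col u) (col z).
    by apply: present_mono_cut puz _ _ cuz; rewrite /diagN; lia.
  by apply: (IH u z _ puz _ cuz cum); lia.
Qed.

End Descent.

Lemma mono_cut_blocker :
  m < n -> col m != col 0 -> col n != col 0 -> col m.+1 != col m -> blocker mono_cut.
Proof.
move=> mn cm0 cn0 col_cut; split=> [e | T trT]; first by rewrite inE => /and3P[].
apply: (bicoloured_descent trT col_cut (u := 0) (w := n)); rewrite 1?eq_sym //.
by rewrite /present /diagN eqxx /=; lia.
Qed.

Lemma card_mono_cut :
  (forall u w, u <= m < w -> w <= n -> col u = col w -> diagN u w) ->
  #|mono_cut| =
    #|[set u : 'I_n.+1 | (u <= m) && col u]| * #|[set w : 'I_n.+1 | (m < w) && col w]|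
  + #|[set u : 'I_n.+1 | (u <= m) && ~~ col u]| * #|[set w : 'I_n.+1 | (m < w) && ~~ col w]|.
Proof.
move=> mono_diag.
have -> : mono_cut =
    setX [set u : 'I_n.+1 | (u <= m) && col u] [set w : 'I_n.+1 | (m < w) && col w]
    :|: setX [set u : 'I_n.+1 | (u <= m) && ~~ col u] [set w : 'I_n.+1 | (m < w) && ~~ col w].
  apply/setP => -[u w]; rewrite !inE /= is_diagE /=.
  have := mono_diag u w; have := ltn_ord w; rewrite /diagN.
  by case: (col u); case: (col w) => /=; lia.
rewrite cardsU !cardsX (_ : _ :&: _ = set0) ?cards0 ?subn0 //.
by apply/setP => -[u w]; rewrite !inE /=; case: (col u); rewrite ?andbT ?andbF.
Qed.

Lemma mono_cut_saturated g s :
  path chain_step (0, n) s -> last (0, n) s = (m, m.+1) ->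
  all (fun x => (col x.1 != col x.2) || (x == (g.1 : nat, g.2 : nat))) ((0, n) :: s) ->
  ~ blocker (mono_cut :\ g).
Proof.
move=> chain last_chain mono_g [_ meets].
have [|T trT sT] := noncrossing_extend _ (chain_set_noncrossing chain).
  by move=> e; rewrite inE => /andP[].
have [[a b] /andP[]] := meets T trT.
rewrite !inE /= => /andP[ab_g /and3P[_ cut_ab /eqP col_ab]] abT.
have off_chain : (a : nat, b : nat) \notin (0, n) :: s.
  apply: contra ab_g => /(allP mono_g); rewrite /= col_ab eqxx /= => /eqP[ag bg].
  by apply/eqP; rewrite -[g]edgeN_val -ag -bg /edgeN !inord_val.
have a_bound : 0 <= a <= (last (0, n) s).1 by rewrite last_chain /=; lia.
have b_bound : (last (0, n) s).2 <= b <= n by rewrite last_chain /=; have := ltn_ord b; lia.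
have [[x y] xy /andP /= [dxy cross_abxy]] :=
  chain_edges_cross (p := (0, n)) (leqnn n) chain a_bound b_bound cut_ab off_chain.
have yn : y <= n by have /allP/(_ _ xy)/andP[] := chain_edges_within chain.
have xyT : edgeN x y \in T.
  apply: (subsetP sT); rewrite inE is_diagE !edgeN1 ?edgeN2 ?dxy //=.
  by move: dxy; rewrite /diagN; lia.
case: trT => _ ncT _; have := ncT _ _ abT xyT.
by rewrite crossE edgeN1 ?edgeN2 ?cross_abxy //; move: dxy; rewrite /diagN; lia.
Qed.

End Colouring.

End Cut.

Definition block_col (p s c x : nat) := [|| 0 < x <= c, x == p.+1 | s < x].

Section BlockColouring.

Variables (p s c : nat).
Hypotheses (ps : p.+2 <= s) (sn : s < n) (cp : c <= p).

Lemma block_cut_saturated : saturated_blocker (mono_cut p.+1 (block_col p s c)).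
Proof.
have col_0 : ~~ block_col p s c 0 by rewrite /block_col; lia.
have col_m : block_col p s c p.+1 by rewrite /block_col; lia.
have col_m1 : ~~ block_col p s c p.+2 by rewrite /block_col; lia.
have col_n : block_col p s c n by rewrite /block_col; lia.
split.
  apply: mono_cut_blocker; rewrite ?(negbTE col_0) ?(negbTE col_m1) ?col_m ?col_n //; lia.
move=> [a b]; rewrite inE /= => /and3P[_ cut_ab /eqP col_ab].
have bn : b <= n := ltn_ord b.
move: col_ab; rewrite /block_col => col_ab.
have [ca | ca] := boolP (block_col p s c a).
- apply: (mono_cut_saturated
    (s := [:: (0, b : nat); (a : nat, b : nat); (a : nat, p.+2); (p.+1, p.+2)]));
    rewrite //= /chain_step /block_col ?xpair_eqE /=; move: ca; rewrite /block_col; lia.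
- apply: (mono_cut_saturated
    (s := [:: (0, s.+1); (a : nat, s.+1); (a : nat, b : nat); (p.+1, b : nat); (p.+1, p.+2)]));
    rewrite //= /chain_step /block_col ?xpair_eqE /=; move: ca; rewrite /block_col; lia.
Qed.

Lemma card_block_cut :
  #|mono_cut p.+1 (block_col p s c)| = c.+1 * (n - s) + (p - c).+1 * (s - p.+1).
Proof.
rewrite card_mono_cut => [|u w cut_uw wn]; last by rewrite /block_col /diagN; lia.
have -> : [set u : 'I_n.+1 | (u <= p.+1) && block_col p s c u] =
          [set u : 'I_n.+1 | 1 <= u < c.+1] :|: [set u : 'I_n.+1 | p.+1 <= u < p.+2].
  by apply/setP => u; rewrite !inE /block_col; lia.
have -> : [set u : 'I_n.+1 | (u <= p.+1) && ~~ block_col p s c u] =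
          [set u : 'I_n.+1 | 0 <= u < 1] :|: [set u : 'I_n.+1 | c.+1 <= u < p.+1].
  by apply/setP => u; rewrite !inE /block_col; lia.
have -> : [set w : 'I_n.+1 | (p.+1 < w) && block_col p s c w] =
          [set w : 'I_n.+1 | s.+1 <= w < n.+1].
  by apply/setP => w; rewrite !inE /block_col; have := ltn_ord w; lia.
have -> : [set w : 'I_n.+1 | (p.+1 < w) && ~~ block_col p s c w] =
          [set w : 'I_n.+1 | p.+2 <= w < s.+1].
  by apply/setP => w; rewrite !inE /block_col; lia.
rewrite !card_ord_rangeU ?card_ord_range; first by congr (_ * _ + _ * _); lia.
all: lia.
Qed.

End BlockColouring.

End ConvexPolygon.

Theorem lemma3p3 (n t : nat) :
  (5 <= n)%N -> (n - 2 <= t)%N -> (8 * t + 11 <= n ^ 2 + 2 * n)%N ->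
  exists B : {set edge n}, nt_blocker t B.
Proof.
case: n => [//|n] n5 t_lo t_hi.
have [p [s [c [ps sn cp ->]]]] := blocker_parameters n5 t_lo t_hi.
exists (mono_cut n p.+1 (block_col p s c)).
by split; [exact: block_cut_saturated | exact: card_block_cut].
Qed.
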